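(* Let $S$ be a completely simple semigroup definable in $\mathcal{M}$. Then there exist definable sets $I,\Lambda$, a definable group $G$ and a definable map $P:\Lambda\times I\to G$ such that $S$ is definably isomorphic to the Rees matrix semigroup $\mathscr{M}(I,G,\Lambda,P)$.
   Context: $\mathcal{M}$ is a sufficiently saturated o-minimal structure with definable choice; ''definable'' means definable with parameters. A semigroup is simple if it has no proper ideals, and completely simple if it is simple and has a primitive idempotent ($e$ with: $f$ idempotent and $ef=fe=f$ imply $f=e$). For a group $G$, nonempty sets $I,\Lambda$ and $P:\Lambda\times I\to G$, $\mathscr{M}(I,G,\Lambda,P)$ is the set $I\times G\times\Lambda$ with product $(i,g,\lambda)(j,h,\mu)=(i,g\,P(\lambda,j)\,h,\mu)$. *)

(* Model-theoretic framework for definability in an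
   o-minimal structure, following van den Dries, "Tame topology and o-minimal
   structures", Ch. 1: a structure on a set M is a family (D_n) of Boolean
   algebras of subsets of M^n closed under products, projections, and
   containing the diagonals; "definable" (with parameters) = belonging to D_n. *)
From mathcomp Require Import all_boot.
Set Implicit Arguments.
Unset Strict Implicit.
Unset Printing Implicit Defensive.

Section Framework.
Variable M : Type.

Definition tset (n : nat) := n.-tuple M -> Prop.

Definition tupL m n (z : (m + n).-tuple M) : m.-tuple M :=
  [tuple tnth z (lshift n i) | i < m].
Definition tupR m n (z : (m + n).-tuple M) : n.-tuple M :=
  [tuple tnth z (rshift m i) | i < n].
Definition tcat m n (x : m.-tuple M) (y : n.-tuple M) : (m + n).-tuple M :=
  cat_tuple x y.

Variable D : forall n, tset n -> Prop.

Record is_structure : Prop := {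
  def_ext : forall n (A B : tset n), D A -> (forall x, A x <-> B x) -> D B;
  def_full : forall n, D (fun _ : n.-tuple M => True);
  def_compl : forall n (A : tset n), D A -> D (fun x => ~ A x);
  def_inter : forall n (A B : tset n), D A -> D B -> D (fun x => A x /\ B x);
  def_prod : forall m n (A : tset m) (B : tset n), D A -> D B ->
      D (fun z : (m + n).-tuple M => A (tupL z) /\ B (tupR z));
  def_diag : forall n (i j : 'I_n), D (fun x : n.-tuple M => tnth x i = tnth x j);
  def_proj : forall m n (A : tset (m + n)), D A ->
      D (fun x : m.-tuple M => exists y : n.-tuple M, A (tcat x y))
}.

Variable lt : M -> M -> Prop.

Definition dlo_without_endpoints : Prop :=
  [/\ (forall x, ~ lt x x),
      (forall x y z, lt x y -> lt y z -> lt x z),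
      (forall x y, lt x y \/ x = y \/ lt y x),
      (forall x y, lt x y -> exists z, lt x z /\ lt z y) &
      (forall x, (exists y, lt y x) /\ (exists y, lt x y))].

(* points and (possibly unbounded) open intervals of M; None = infinity *)
Inductive piece := Pt of M | Itv of option M & option M.

Definition in_piece (p : piece) (x : M) : Prop :=
  match p with
  | Pt a => x = a
  | Itv a b => (forall a', a = Some a' -> lt a' x) /\
               (forall b', b = Some b' -> lt x b')
  end.

(* o-minimal structure on (M,<): < is definable, all points are definable
   (definability with parameters), and every definable subset of M is a
   finite union of points and intervals. *)
Definition o_minimal : Prop :=
  [/\ is_structure, dlo_without_endpoints,
      D (fun x : 2.-tuple M => lt (tnth x ord0) (tnth x ord_max)),
      (forall a : M, D (fun x : 1.-tuple M => tnth x ord0 = a)) &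
      (forall A : tset 1, D A -> exists s : seq piece,
          forall x : M, A [tuple x] <-> foldr (fun p P => in_piece p x \/ P) False s)].

Definition def_map m k (dom : tset m) (f : m.-tuple M -> k.-tuple M) : Prop :=
  D (fun z : (m + k).-tuple M => dom (tupL z) /\ tupR z = f (tupL z)).

Definition definable_choice : Prop :=
  forall m n (X : tset (m + n)), D X ->
    let pi := fun x : m.-tuple M => exists y, X (tcat x y) in
    exists f : m.-tuple M -> n.-tuple M,
      [/\ def_map pi f,
          (forall x, pi x -> X (tcat x (f x))) &
          (forall x x', pi x -> pi x' ->
              (forall y, X (tcat x y) <-> X (tcat x' y)) -> f x = f x')].

Definition aleph1_saturated : Prop :=
  forall n (F : nat -> tset n), (forall k, D (F k)) ->
    (forall s : seq nat, exists x, forall k, k \in s -> F k x) ->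
    exists x, forall k, F k x.

Definition definable_semigroup n (S : tset n)
    (mul : n.-tuple M -> n.-tuple M -> n.-tuple M) : Prop :=
  [/\ D S,
      def_map (fun w : (n + n).-tuple M => S (tupL w) /\ S (tupR w))
              (fun w => mul (tupL w) (tupR w)),
      (forall x y, S x -> S y -> S (mul x y)) &
      (forall x y z, S x -> S y -> S z -> mul x (mul y z) = mul (mul x y) z)].

Definition definable_group k (G : tset k)
    (mul : k.-tuple M -> k.-tuple M -> k.-tuple M) : Prop :=
  definable_semigroup G mul /\
  exists e, [/\ G e, (forall g, G g -> mul e g = g /\ mul g e = g) &
                 (forall g, G g -> exists h, G h /\ mul g h = e /\ mul h g = e)].

End Framework.

Section Semigroup.
Variables (T : Type) (S : T -> Prop) (mul : T -> T -> T).

Definition is_ideal (J : T -> Prop) : Prop :=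
  [/\ (exists x, J x), (forall x, J x -> S x) &
      (forall x y, S x -> J y -> J (mul x y) /\ J (mul y x))].

Definition simple_sg : Prop :=
  forall J, is_ideal J -> forall x, S x -> J x.

Definition idempotent (e : T) : Prop := S e /\ mul e e = e.

Definition primitive_idempotent (e : T) : Prop :=
  idempotent e /\
  forall f, idempotent f -> mul e f = f -> mul f e = f -> f = e.

Definition completely_simple : Prop :=
  simple_sg /\ exists e, primitive_idempotent e.
End Semigroup.

(* Fix a primitive idempotent e of S. By simplicity e lies in S g S for every
   g, and by primitivity e is the only idempotent of the monoid eSe; together
   these make eSe a group with identity e. For x in S let x' be the inverse of
   exe in eSe. Writing x = u e v, the element (eve) x' (eue) is an idempotent
   of eSe, hence equal to e, which gives x x' x = x. Consequently i = x x' and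
   l = x' x are idempotents L- resp. R-related to e and x = i (exe) l; the
   coordinates (i, exe, l) are recovered from any product i g l, and
   (i g l)(j h m) = i (g (l j) h) m with l j in eSe. This is the Rees
   isomorphism with P(l, i) = l i. All the sets involved are cut out by
   equations in the multiplication and the parameter e, and x' is the unique h
   in eSe with (exe) h = e. *)

From mathcomp Require Import all_boot.
From Stdlib Require Import ClassicalEpsilon.
Set Implicit Arguments. Unset Strict Implicit. Unset Printing Implicit Defensive.

Section Definable.
Variables (M : Type) (D : forall n, tset M n -> Prop).
Hypothesis HD : is_structure D.

Lemma tupL_tcat m n (x : m.-tuple M) (y : n.-tuple M) : tupL (tcat x y) = x.
Proof. by apply: eq_from_tnth => i; rewrite tnth_mktuple tnth_lshift. Qed.

Lemma tupR_tcat m n (x : m.-tuple M) (y : n.-tuple M) : tupR (tcat x y) = y.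
Proof. by apply: eq_from_tnth => i; rewrite tnth_mktuple tnth_rshift. Qed.

Lemma tcat_tupLR m n (z : (m + n).-tuple M) : tcat (tupL z) (tupR z) = z.
Proof.
apply: eq_from_tnth => i; rewrite -(splitK i); case: (split i) => j /=.
  by rewrite tnth_lshift tnth_mktuple.
by rewrite tnth_rshift tnth_mktuple.
Qed.

Lemma tcat_eq m n (z : (m + n).-tuple M) x y :
  z = tcat x y <-> tupL z = x /\ tupR z = y.
Proof.
split=> [->|[<- <-]]; last by rewrite tcat_tupLR.
by rewrite tupL_tcat tupR_tcat.
Qed.

Definition coord_map m k (F : m.-tuple M -> k.-tuple M) :=
  exists b : 'I_k -> 'I_m, forall x, F x = [tuple tnth x (b j) | j < k].

Lemma coord_map_id m : coord_map (fun x : m.-tuple M => x).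
Proof. by exists id => x; apply: eq_from_tnth => j; rewrite tnth_mktuple. Qed.

Lemma coord_map_tupL m n : coord_map (@tupL M m n).
Proof. by exists (lshift n). Qed.

Lemma coord_map_tupR m n : coord_map (@tupR M m n).
Proof. by exists (@rshift m n). Qed.

Lemma coord_map_comp m k l (F : m.-tuple M -> k.-tuple M) (G : k.-tuple M -> l.-tuple M) :
  coord_map F -> coord_map G -> coord_map (fun x => G (F x)).
Proof.
move=> [b Fb] [c Gc]; exists (fun j => b (c j)) => x.
by apply: eq_from_tnth => j; rewrite Gc Fb !tnth_mktuple.
Qed.

Lemma coord_map_tcat m k l (F : m.-tuple M -> k.-tuple M) (G : m.-tuple M -> l.-tuple M) :
  coord_map F -> coord_map G -> coord_map (fun x => tcat (F x) (G x)).
Proof.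
move=> [b Fb] [c Gc].
exists (fun j => match split j with inl i => b i | inr i => c i end) => x.
apply: eq_from_tnth => j; rewrite tnth_mktuple -(splitK j).
case: (split j) => i /=.
  by rewrite -[lshift l i]/(unsplit (inl i)) unsplitK tnth_lshift Fb tnth_mktuple.
by rewrite -[rshift k i]/(unsplit (inr i)) unsplitK tnth_rshift Gc tnth_mktuple.
Qed.

Lemma D_big_and m k (A : 'I_k -> tset M m) :
  (forall j, D (A j)) -> D (fun x => forall j, A j x).
Proof.
move=> DA.
suff /(_ (enum 'I_k)) Ds : forall s : seq 'I_k, D (fun x => forall j, j \in s -> A j x).
  apply: (def_ext HD Ds) => x; split=> Ax j; first exact: Ax (mem_enum _ j).
  by move=> _; apply: Ax.
elim=> [|j s IHs].
  by apply: (def_ext HD (def_full HD m)) => x.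
apply: (def_ext HD (def_inter HD (DA j) IHs)) => x; split.
  by case=> Ajx Asx i /predU1P[->|/Asx].
by move=> Ax; split=> [|i si]; apply: Ax; rewrite inE ?eqxx ?si ?orbT.
Qed.

Lemma D_exists m k (Q : m.-tuple M -> k.-tuple M -> Prop) :
  D (fun z : (m + k).-tuple M => Q (tupL z) (tupR z)) -> D (fun x => exists y, Q x y).
Proof.
move=> DQ; apply: (def_ext HD (def_proj HD DQ)) => x.
by split=> -[y Qy]; exists y; rewrite ?tupL_tcat ?tupR_tcat in Qy *.
Qed.

Lemma D_coord_graph m k (F : m.-tuple M -> k.-tuple M) :
  coord_map F -> D (fun z : (m + k).-tuple M => tupR z = F (tupL z)).
Proof.
case=> b Fb.
apply: (def_ext HD (D_big_and (fun j => def_diag HD (rshift m j) (lshift k (b j))))) => z.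
split=> [E|E j]; last by move: (congr1 (fun t => tnth t j) E); rewrite Fb !tnth_mktuple.
by apply: eq_from_tnth => j; rewrite Fb !tnth_mktuple.
Qed.

Lemma D_coord_preimage m k (A : tset M k) (F : m.-tuple M -> k.-tuple M) :
  D A -> coord_map F -> D (fun x => A (F x)).
Proof.
move=> DA /D_coord_graph DF.
have DAF := def_inter HD DF (def_prod HD (def_full HD m) DA).
apply: (def_ext HD (D_exists (Q := fun x y => y = F x /\ True /\ A y) DAF)) => x.
by split=> [[y [-> []]] | Ax]; last by exists (F x).
Qed.

Lemma def_map_coord m k (dom : tset M m) (F : m.-tuple M -> k.-tuple M) :
  D dom -> coord_map F -> def_map D dom F.
Proof.
move=> Ddom /D_coord_graph DF.
exact: (def_inter HD (D_coord_preimage Ddom (coord_map_tupL m k)) DF).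
Qed.

Lemma def_map_ext m k (dom : tset M m) (F G : m.-tuple M -> k.-tuple M) :
  (forall x, dom x -> F x = G x) -> def_map D dom F -> def_map D dom G.
Proof.
move=> FG DF; apply: (def_ext HD DF) => z.
by split=> -[domz ->]; rewrite ?FG.
Qed.

Lemma def_map_tcat m k l (dom : tset M m)
    (F : m.-tuple M -> k.-tuple M) (G : m.-tuple M -> l.-tuple M) :
  def_map D dom F -> def_map D dom G -> def_map D dom (fun x => tcat (F x) (G x)).
Proof.
move=> DF DG.
have cF : coord_map (fun z : (m + (k + l)).-tuple M => tcat (tupL z) (tupL (tupR z))).
  exact: coord_map_tcat (coord_map_tupL _ _)
                       (coord_map_comp (coord_map_tupR _ _) (coord_map_tupL _ _)).
have cG : coord_map (fun z : (m + (k + l)).-tuple M => tcat (tupL z) (tupR (tupR z))).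
  exact: coord_map_tcat (coord_map_tupL _ _)
                       (coord_map_comp (coord_map_tupR _ _) (coord_map_tupR _ _)).
apply: (def_ext HD (def_inter HD (D_coord_preimage DF cF) (D_coord_preimage DG cG))) => z.
rewrite !tupL_tcat !tupR_tcat.
split=> [[[domz zF] [_ zG]] | [domz /tcat_eq[zF zG]]]; last by [].
by split=> //; apply/tcat_eq.
Qed.

Lemma def_map_comp m k l (dom : tset M m) (dom' : tset M k)
    (F : m.-tuple M -> k.-tuple M) (G : k.-tuple M -> l.-tuple M) :
  def_map D dom F -> def_map D dom' G -> (forall x, dom x -> dom' (F x)) ->
  def_map D dom (fun x => G (F x)).
Proof.
move=> DF DG domF.
have cF : coord_map (fun u : ((m + l) + k).-tuple M => tcat (tupL (tupL u)) (tupR u)).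
  exact: coord_map_tcat (coord_map_comp (coord_map_tupL _ _) (coord_map_tupL _ _))
                       (coord_map_tupR _ _).
have cG : coord_map (fun u : ((m + l) + k).-tuple M => tcat (tupR u) (tupR (tupL u))).
  exact: coord_map_tcat (coord_map_tupR _ _)
                       (coord_map_comp (coord_map_tupL _ _) (coord_map_tupR _ _)).
have DFG := def_inter HD (D_coord_preimage DF cF) (D_coord_preimage DG cG).
apply: (def_ext HD (D_exists (Q := fun w y => (dom (tupL w) /\ y = F (tupL w)) /\
                                   (dom' y /\ tupR w = G y)) _)) => [|w].
  by apply: (def_ext HD DFG) => u; rewrite !tupL_tcat !tupR_tcat.
split=> [[y [[domw ->] [_ ->]]] | [domw ->]] //.
by exists (F (tupL w)); split; split=> //; apply: domF.
Qed.

Lemma D_eq_maps m k (dom : tset M m) (F G : m.-tuple M -> k.-tuple M) :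
  def_map D dom F -> def_map D dom G -> D (fun x => dom x /\ F x = G x).
Proof.
move=> DF DG.
apply: (def_ext HD (D_exists (Q := fun x y => (dom x /\ y = F x) /\ (dom x /\ y = G x))
                             (def_inter HD DF DG))) => x.
by split=> [[y [[domx ->] [_ ->]]] | [domx FG]] //; exists (F x).
Qed.

Hypothesis D_point : forall a : M, D (fun x : 1.-tuple M => tnth x ord0 = a).

Lemma D_singleton n (c : n.-tuple M) : D (fun x : n.-tuple M => x = c).
Proof.
have Dc j : D (fun x : n.-tuple M => tnth x j = tnth c j).
  have cj : coord_map (fun x : n.-tuple M => [tuple tnth x j | _ < 1]) by exists (fun=> j).
  by apply: (def_ext HD (D_coord_preimage (D_point (tnth c j)) cj)) => x; rewrite tnth_mktuple.
apply: (def_ext HD (D_big_and Dc)) => x.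
by split=> [/eq_from_tnth | ->].
Qed.

Lemma def_map_const m k (dom : tset M m) (c : k.-tuple M) :
  D dom -> def_map D dom (fun=> c).
Proof.
move=> Ddom; exact: (def_inter HD (D_coord_preimage Ddom (coord_map_tupL m k))
                                 (D_coord_preimage (D_singleton c) (coord_map_tupR m k))).
Qed.

End Definable.

Section CompletelySimple.
Variables (T : Type) (S : T -> Prop) (mul : T -> T -> T).
Local Notation "x * y" := (mul x y).
Hypothesis mulS : forall x y, S x -> S y -> S (x * y).
Hypothesis mulA : forall x y z, S x -> S y -> S z -> x * (y * z) = x * y * z.
Hypothesis S_simple : simple_sg S mul.
Variable e : T.
Hypothesis e_primitive : primitive_idempotent S mul e.

Let Se : S e. Proof. by case: e_primitive => -[]. Qed.
Let ee : e * e = e. Proof. by case: e_primitive => -[]. Qed.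
#[local] Hint Resolve mulS Se : core.

Local Ltac assoc := rewrite ?mulA; repeat apply: mulS; auto.

Lemma simple_sandwich a x : S a -> S x -> exists u v, [/\ S u, S v & x = u * a * v].
Proof.
move=> Sa Sx.
apply: (S_simple (J := fun x => exists u v, [/\ S u, S v & x = u * a * v])) Sx; split.
- by exists (a * a * a), a, a.
- by move=> _ [u [v [Su Sv ->]]]; auto.
move=> s _ Ss [u [v [Su Sv ->]]]; split.
  by exists (s * u), v; split; assoc.
by exists u, (v * s); split; assoc.
Qed.

Lemma idempotent_eq_e f :
  S f -> f * f = f -> e * f = f -> f * e = f -> f = e.
Proof. by move=> Sf ff ef fe; case: e_primitive => _; apply. Qed.

Definition in_eSe g := [/\ S g, e * g = g & g * e = g].

Lemma in_eSe_sandwich x : S x -> in_eSe (e * x * e).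
Proof.
move=> Sx; split; first by auto.
  by rewrite !mulA ?ee; auto.
by rewrite -!mulA ?ee; auto.
Qed.

Lemma in_eSe_mul g h : in_eSe g -> in_eSe h -> in_eSe (g * h).
Proof.
case=> Sg eg _ [Sh _ he]; split; first exact: mulS.
  by rewrite mulA ?eg.
by rewrite -mulA ?he.
Qed.

Lemma in_eSe_inverse g : in_eSe g -> exists h, [/\ in_eSe h, g * h = e & h * g = e].
Proof.
move=> Gg; have [Sg eg ge] := Gg.
have [u [v [Su Sv euv]]] := simple_sandwich Sg Se.
have UgV : e * u * e * g * (e * v * e) = e.
  have -> : e * u * e * g * (e * v * e) = e * (u * (e * g * e) * v) * e by assoc.
  by rewrite eg ge -euv !ee.
have GU := in_eSe_sandwich Su; have GV := in_eSe_sandwich Sv.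
move: (e * u * e) (e * v * e) GU GV UgV => U V GU GV UgV.
have [[SU eU Ue] [SV eV Ve]] := (GU, GV).
exists (V * U); split; first exact: in_eSe_mul.
  apply: idempotent_eq_e; auto.
  - have -> : g * (V * U) * (g * (V * U)) = g * (V * e) * U by rewrite -UgV; assoc.
    by rewrite Ve mulA.
  - by rewrite mulA ?eg; auto.
  - by rewrite -!mulA ?Ue; auto.
apply: idempotent_eq_e; auto.
- have -> : V * U * g * (V * U * g) = V * (e * U) * g by rewrite -UgV; assoc.
  by rewrite eU.
- by rewrite !mulA ?eV; auto.
- by rewrite -mulA ?ge; auto.
Qed.

Definition eSe_inv g := epsilon (inhabits e) (fun h => [/\ in_eSe h, g * h = e & h * g = e]).

Lemma eSe_invP g : in_eSe g -> [/\ in_eSe (eSe_inv g), g * eSe_inv g = e & eSe_inv g * g = e].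
Proof. by move/in_eSe_inverse/(epsilon_spec (inhabits e)). Qed.

Lemma eSe_inv_unique g h : in_eSe g -> in_eSe h -> g * h = e -> h = eSe_inv g.
Proof.
move=> Gg [Sh eh _] gh; have [[Sg' _ g'e] _ g'g] := eSe_invP Gg; have [Sg _ _] := Gg.
by rewrite -eh -g'g -mulA // gh g'e.
Qed.

Definition sg_inv x := eSe_inv (e * x * e).

Lemma sg_invP x : S x ->
  [/\ in_eSe (sg_inv x), e * x * e * sg_inv x = e & sg_inv x * (e * x * e) = e].
Proof. by move/in_eSe_sandwich/eSe_invP. Qed.

Lemma sg_inv_unique x h : S x -> in_eSe h -> e * x * e * h = e -> h = sg_inv x.
Proof. by move/in_eSe_sandwich; apply: eSe_inv_unique. Qed.

Lemma mul_sg_inv_mul x : S x -> x * sg_inv x * x = x.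
Proof.
move=> Sx; have [[Sk ek ke] _ kx] := sg_invP Sx.
move: (sg_inv x) Sk ek ke kx => k Sk ek ke kx.
have [u [v [Su Sv xuv]]] := simple_sandwich Se Sx.
have exe : e * x * e = e * u * e * (e * v * e).
  have -> : e * u * e * (e * v * e) = e * u * (e * e) * v * e by assoc.
  by rewrite ee xuv; assoc.
have -> : x * k * x = u * (e * v * e * k * (e * u * e)) * v.
  by rewrite -{1}ke -{1}ek xuv; assoc.
have [GU GV] := (in_eSe_sandwich Su, in_eSe_sandwich Sv).
move: (e * u * e) (e * v * e) GU GV exe => U V [SU eU Ue] [SV eV Ve] exe.
suff -> : V * k * U = e by rewrite -xuv.
apply: idempotent_eq_e; auto.
- have -> : V * k * U * (V * k * U) = V * (k * (U * V)) * k * U by assoc.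
  by rewrite -exe kx Ve.
- by rewrite !mulA ?eV; auto.
- by rewrite -mulA ?Ue; auto.
Qed.

(* The idempotents L-related, resp. R-related, to e: the index sets I and Lambda. *)
Definition Le_idem i := [/\ S i, i * i = i, i * e = i & e * i = e].
Definition Re_idem l := [/\ S l, l * l = l, e * l = l & l * e = e].

Definition rees_coords x := (x * sg_inv x, e * x * e, sg_inv x * x).

Lemma rees_coords_in x : S x ->
  let: (i, g, l) := rees_coords x in [/\ Le_idem i, in_eSe g & Re_idem l].
Proof.
move=> Sx; have [[Sk ek ke] xk kx] := sg_invP Sx; have xkx := mul_sg_inv_mul Sx.
rewrite /rees_coords; move: (sg_inv x) Sk ek ke xk kx xkx => k Sk ek ke xk kx xkx.
split; [split | exact: in_eSe_sandwich | split]; auto.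
- by rewrite -[in RHS]xkx; assoc.
- by rewrite -mulA ?ke.
- by rewrite -{1}ek !mulA ?xk; auto.
- by rewrite -[in RHS]xkx; assoc.
- by rewrite mulA ?ek.
- by rewrite -[RHS]kx -{1}ke; assoc.
Qed.

Lemma rees_coordsK x : S x -> let: (i, g, l) := rees_coords x in i * g * l = x.
Proof.
move=> Sx; have [[Sk ek _] _ kx] := sg_invP Sx; have xkx := mul_sg_inv_mul Sx.
rewrite /rees_coords; move: (sg_inv x) Sk ek kx xkx => k Sk ek kx xkx.
have -> : x * k * (e * x * e) * (k * x) = x * (k * (e * x * e)) * k * x by assoc.
by rewrite kx -[x * e * k]mulA ?ek.
Qed.

Lemma rees_coords_inj x y : S x -> S y -> rees_coords x = rees_coords y -> x = y.
Proof.
move=> Sx Sy Exy; move: (rees_coordsK Sx) (rees_coordsK Sy).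
by rewrite Exy; case: (rees_coords y) => [[i g] l] -> .
Qed.

Lemma rees_coords_triple i g l : Le_idem i -> in_eSe g -> Re_idem l ->
  rees_coords (i * g * l) = (i, g, l).
Proof.
move=> [Si _ ie ei] Gg [Sl _ el le]; have [Sg eg ge] := Gg.
have exe : e * (i * g * l) * e = g.
  have -> : e * (i * g * l) * e = e * i * g * (l * e) by assoc.
  by rewrite ei le -mulA ?ge.
have [[Sh eh he] gh hg] := eSe_invP Gg.
rewrite /rees_coords /sg_inv exe; move: (eSe_inv g) Sh eh he gh hg => h Sh eh he gh hg.
have lh : l * h = h by rewrite -eh mulA ?le.
congr (_, _, _).
- by rewrite -mulA ?lh -?mulA ?gh ?ie; auto.
- have -> : h * (i * g * l) = h * (e * i) * g * l by rewrite -{1}he; assoc.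
  by rewrite ei he hg.
Qed.

Lemma Re_Le_in_eSe l j : Re_idem l -> Le_idem j -> in_eSe (l * j).
Proof.
case=> Sl _ el _ [Sj _ je _]; split; auto.
  by rewrite mulA ?el.
by rewrite -mulA ?je.
Qed.

Lemma rees_coords_mul x y : S x -> S y ->
  let: (i, g, l) := rees_coords x in let: (j, h, m) := rees_coords y in
  rees_coords (x * y) = (i, g * (l * j) * h, m).
Proof.
move=> Sx Sy; move: (rees_coords_in Sx) (rees_coordsK Sx) (rees_coords_in Sy) (rees_coordsK Sy).
case: (rees_coords x) => [[i g] l] [Ii Gg Rl] <-; case: (rees_coords y) => [[j h] m] [Ij Gh Rm] <-.
have [[Si _ _ _] [Sg _ _] [Sl _ _ _]] := And3 Ii Gg Rl.
have [[Sj _ _ _] [Sh _ _] [Sm _ _ _]] := And3 Ij Gh Rm.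
have -> : i * g * l * (j * h * m) = i * (g * (l * j) * h) * m by assoc.
by rewrite rees_coords_triple //; do 2!apply: in_eSe_mul => //; apply: Re_Le_in_eSe.
Qed.

End CompletelySimple.

Section DefinableRees.
Variables (M : Type) (D : forall n, tset M n -> Prop).
Hypothesis HD : is_structure D.
Hypothesis D_point : forall a : M, D (fun x : 1.-tuple M => tnth x ord0 = a).
Variables (n : nat) (S : tset M n) (mul : n.-tuple M -> n.-tuple M -> n.-tuple M).
Hypothesis DS : D S.
Hypothesis Dmul : def_map D (fun w : (n + n).-tuple M => S (tupL w) /\ S (tupR w))
                            (fun w => mul (tupL w) (tupR w)).
Hypothesis mulS : forall x y, S x -> S y -> S (mul x y).
Hypothesis mulA : forall x y z, S x -> S y -> S z -> mul x (mul y z) = mul (mul x y) z.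
Hypothesis S_simple : simple_sg S mul.
Variable e : n.-tuple M.
Hypothesis e_primitive : primitive_idempotent S mul e.

Let Se : S e. Proof. by case: e_primitive => -[]. Qed.

Lemma def_map_mul m (dom : tset M m) (F G : m.-tuple M -> n.-tuple M) :
  (forall x, dom x -> S (F x) /\ S (G x)) -> def_map D dom F -> def_map D dom G ->
  def_map D dom (fun x => mul (F x) (G x)).
Proof.
move=> SFG DF DG.
have SFG' x : dom x -> S (tupL (tcat (F x) (G x))) /\ S (tupR (tcat (F x) (G x))).
  by rewrite tupL_tcat tupR_tcat; apply: SFG.
refine (def_map_ext HD _ (def_map_comp HD (def_map_tcat HD DF DG) Dmul SFG')) => x _.
by rewrite tupL_tcat tupR_tcat.
Qed.

Lemma def_map_mul_on (A B : tset M n) :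
  D A -> D B -> (forall x, A x -> S x) -> (forall x, B x -> S x) ->
  def_map D (fun w : (n + n).-tuple M => A (tupL w) /\ B (tupR w))
            (fun w => mul (tupL w) (tupR w)).
Proof.
move=> DA DB AS BS; have Ddom := def_prod HD DA DB.
apply: def_map_mul; first by move=> w [/AS ? /BS ?].
  exact (def_map_coord HD Ddom (coord_map_tupL M n n)).
exact (def_map_coord HD Ddom (coord_map_tupR M n n)).
Qed.

Lemma D_S_mul_eq (F G H : n.-tuple M -> n.-tuple M) :
  (forall x, S x -> S (F x) /\ S (G x)) ->
  def_map D S F -> def_map D S G -> def_map D S H ->
  D (fun x => S x /\ mul (F x) (G x) = H x).
Proof. by move=> SFG DF DG; apply: (D_eq_maps HD (def_map_mul SFG DF DG)). Qed.

Let D_id : def_map D S (fun x => x).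
Proof. exact (def_map_coord HD DS (coord_map_id M n)). Qed.

Let D_e : def_map D S (fun=> e).
Proof. exact (def_map_const HD D_point e DS). Qed.

Let D_xx := D_S_mul_eq (fun x Sx => conj Sx Sx) D_id D_id D_id.
Let D_xe_x := D_S_mul_eq (fun x Sx => conj Sx Se) D_id D_e D_id.
Let D_ex_x := D_S_mul_eq (fun x Sx => conj Se Sx) D_e D_id D_id.
Let D_xe_e := D_S_mul_eq (fun x Sx => conj Sx Se) D_id D_e D_e.
Let D_ex_e := D_S_mul_eq (fun x Sx => conj Se Sx) D_e D_id D_e.

Lemma D_Le_idem : D (Le_idem S mul e).
Proof.
apply: (def_ext HD (def_inter HD D_xx (def_inter HD D_xe_x D_ex_e))) => x.
by split=> [[[Sx ?] [[_ ?] [_ ?]]] | [Sx ? ? ?]].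
Qed.

Lemma D_Re_idem : D (Re_idem S mul e).
Proof.
apply: (def_ext HD (def_inter HD D_xx (def_inter HD D_ex_x D_xe_e))) => x.
by split=> [[[Sx ?] [[_ ?] [_ ?]]] | [Sx ? ? ?]].
Qed.

Lemma D_in_eSe : D (in_eSe S mul e).
Proof.
apply: (def_ext HD (def_inter HD D_ex_x D_xe_x)) => x.
by split=> [[[Sx ?] [_ ?]] | [Sx ? ?]].
Qed.

Lemma definable_group_eSe : definable_group D (in_eSe S mul e) mul.
Proof.
have GS g : in_eSe S mul e g -> S g by case.
split; first split.
- exact: D_in_eSe.
- exact (def_map_mul_on D_in_eSe D_in_eSe GS GS).
- exact: in_eSe_mul.
- by move=> x y z /GS ? /GS ? /GS ?; apply: mulA.
exists e; split.
- by have [[_ ee] _] := e_primitive; split.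
- by move=> g [].
- move=> g /(in_eSe_inverse mulS mulA S_simple e_primitive)[h [Gh gh hg]].
  by exists h.
Qed.

Lemma def_map_sg_inv : def_map D S (sg_inv S mul e).
Proof.
pose dom (z : (n + n).-tuple M) := S (tupL z) /\ in_eSe S mul e (tupR z).
have Ddom : D dom := def_prod HD DS D_in_eSe.
have Dx := def_map_coord HD Ddom (coord_map_tupL M n n).
have Dh := def_map_coord HD Ddom (coord_map_tupR M n n).
have De := def_map_const HD D_point e Ddom.
have Dex : def_map D dom (fun z => mul e (tupL z)) by apply: def_map_mul => // z [].
have Dexe : def_map D dom (fun z => mul (mul e (tupL z)) e).
  by apply: def_map_mul => // z [Sx _]; auto.
have Dexeh : def_map D dom (fun z => mul (mul (mul e (tupL z)) e) (tupR z)).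
  by apply: def_map_mul => // z [Sx [Sh _ _]]; auto.
apply: (def_ext HD (D_eq_maps HD Dexeh De)) => z; split.
  by case=> -[Sx Gh] E; split=> //; apply: sg_inv_unique.
case=> Sx E; have [Gk xk _] := sg_invP mulS mulA S_simple e_primitive Sx.
by rewrite /dom E; split; first split.
Qed.

Lemma def_map_rees_coords :
  def_map D S (fun x => let: (i, g, l) := rees_coords S mul e x in tcat i (tcat g l)).
Proof.
have Sk x : S x -> S (sg_inv S mul e x).
  by move/(sg_invP mulS mulA S_simple e_primitive)=> [[]].
rewrite /rees_coords /=; refine (def_map_tcat HD _ (def_map_tcat HD _ _)).
- by apply: def_map_mul D_id def_map_sg_inv => x Sx; split; auto.
- by apply: (def_map_mul _ (def_map_mul _ D_e D_id) D_e) => x Sx; split; auto.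
- by apply: def_map_mul def_map_sg_inv D_id => x Sx; split; auto.
Qed.
End DefinableRees.

Theorem mainTheorem17
  (M : Type) (lt : M -> M -> Prop) (D : forall n, tset M n -> Prop)
  (Hom : o_minimal D lt) (Hch : definable_choice D) (Hsat : aleph1_saturated D)
  (n : nat) (S : tset M n) (mul : n.-tuple M -> n.-tuple M -> n.-tuple M)
  (HS : definable_semigroup D S mul) (Hcs : completely_simple S mul) :
  exists (p q r : nat) (I : tset M p) (G : tset M q) (Lam : tset M r)
         (gmul : q.-tuple M -> q.-tuple M -> q.-tuple M)
         (P : r.-tuple M -> p.-tuple M -> q.-tuple M)
         (phi : n.-tuple M -> p.-tuple M * q.-tuple M * r.-tuple M),
    [/\ D _ I, D _ Lam & definable_group D G gmul] /\
        (* P : Lambda x I -> G is definable *)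
        def_map D (fun w : (r + p).-tuple M => Lam (tupL w) /\ I (tupR w))
                  (fun w => P (tupL w) (tupR w)) /\
        (forall l i, Lam l -> I i -> G (P l i)) /\
        (* phi : S -> I x G x Lambda is definable *)
        def_map D S (fun x => let: (i, g, l) := phi x in tcat i (tcat g l)) /\
        (* phi is a bijection onto I x G x Lambda *)
        (forall x, S x -> let: (i, g, l) := phi x in [/\ I i, G g & Lam l]) /\
        (forall x y, S x -> S y -> phi x = phi y -> x = y) /\
        (forall i g l, I i -> G g -> Lam l -> exists x, S x /\ phi x = (i, g, l)) /\
        (* phi is a homomorphism into the Rees matrix semigroup M(I,G,Lambda,P) *)
        (forall x y, S x -> S y ->
           let: (i, g, l) := phi x in let: (j, h, m) := phi y in
           phi (mul x y) = (i, gmul (gmul g (P l j)) h, m)).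
Proof.
case: Hom => HD _ _ D_point _; case: HS => DS Dmul mulS mulA.
case: Hcs => S_simple [e e_primitive].
have DLe := D_Le_idem HD D_point DS Dmul e_primitive.
have DRe := D_Re_idem HD D_point DS Dmul e_primitive.
exists n, n, n, (Le_idem S mul e), (in_eSe S mul e), (Re_idem S mul e), mul, mul,
  (rees_coords S mul e).
split.
  by split=> //; exact: (definable_group_eSe HD D_point DS Dmul mulS mulA S_simple e_primitive).
split; first by apply: (def_map_mul_on HD Dmul DRe DLe) => x [].
split; first exact: Re_Le_in_eSe.
split; first exact: (def_map_rees_coords HD D_point DS Dmul mulS mulA S_simple e_primitive).
split; first exact: (rees_coords_in mulS mulA S_simple e_primitive).
split; first exact: (rees_coords_inj mulS mulA S_simple e_primitive).
split; last exact: (rees_coords_mul mulS mulA S_simple e_primitive).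
move=> i g l Ii Gg Rl; exists (mul (mul i g) l).
split; last exact: (rees_coords_triple mulS mulA S_simple e_primitive Ii Gg Rl).
by case: Ii Gg Rl => Si _ _ _ [Sg _ _] [Sl _ _ _]; auto.
Qed.
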